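(* Let $F$ be a digraph and let $a$ be an arc of $F$. If $F-a$ is $\vec{\chi}$-maderian, then $F$ is $\vec{\chi}$-maderian and $\mathrm{mad}_{\vec{\chi}}(F)\le 4\cdot\mathrm{mad}_{\vec{\chi}}(F-a)-3$.
   Context: $\vec{\chi}(D)$, the dichromatic number, is the least $k$ such that $V(D)$ can be partitioned into $k$ sets each inducing an acyclic subdigraph. A subdivision of $F$ is obtained by replacing each arc $(x,y)$ by a directed $(x,y)$-path, internally disjoint with new internal vertices. $F$ is $\vec{\chi}$-maderian if there is an integer $c$ such that every digraph $D$ with $\vec{\chi}(D)\ge c$ contains a subdivision of $F$ as a subdigraph; $\mathrm{mad}_{\vec{\chi}}(F)$ is the least such $c$. *)

From mathcomp Require Import all_boot.
Set Implicit Arguments. Unset Strict Implicit. Unset Printing Implicit Defensive.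

(* A digraph (V, E): loopless (digons allowed, no parallel arcs). *)
Definition loopless (V : finType) (E : rel V) : Prop := irreflexive E.

(* S induces an acyclic subdigraph: no directed cycle all of whose vertices are in S.
   [cycle E c] with c = x :: p means x -> p1 -> ... -> pn -> x. *)
Definition acyclic_in (V : finType) (E : rel V) (S : pred V) : Prop :=
  forall c : seq V, c != [::] -> all S c -> ~~ cycle E c.

Definition dicolorable (V : finType) (E : rel V) (k : nat) : Prop :=
  exists f : V -> 'I_k, forall i : 'I_k, acyclic_in E (fun v => f v == i).

Definition dichrom_ge (V : finType) (E : rel V) (c : nat) : Prop :=
  forall k, dicolorable E k -> c <= k.

Definition contains_subdivision (VF : finType) (EF : rel VF)
    (V : finType) (E : rel V) : Prop :=
  exists (phi : VF -> V) (P : VF -> VF -> seq V),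
    injective phi /\
    (forall x y, EF x y ->
       [/\ path E (phi x) (rcons (P x y) (phi y)),
           uniq (P x y) &
           forall z, z \in P x y -> forall w, z != phi w]) /\
    (forall x y x' y', EF x y -> EF x' y' -> (x, y) != (x', y') ->
       forall z, z \in P x y -> z \notin P x' y').

Definition mad_bound (VF : finType) (EF : rel VF) (c : nat) : Prop :=
  forall (V : finType) (E : rel V), loopless E -> dichrom_ge E c ->
    contains_subdivision EF E.

Definition maderian (VF : finType) (EF : rel VF) : Prop :=
  exists c, mad_bound EF c.

Definition is_mad (VF : finType) (EF : rel VF) (m : nat) : Prop :=
  mad_bound EF m /\ forall c, mad_bound EF c -> m <= c.

Definition del_arc (VF : finType) (EF : rel VF) (a : VF * VF) : rel VF :=
  fun x y => EF x y && ((x, y) != a).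

(* If chi(D) >= 4k - 3, then D has a vertex set A with chi(D[A]) >= k in
   which any two vertices are joined by a directed path whose interior avoids
   A; a subdivision of F - (u, v) inside D[A] then extends to one of F by
   routing (u, v) along such a path.
   Two facts produce A. Some strong component has the full dichromatic
   number. Given a root r, split the vertices reaching r by their distance
   to r: arcs descend at most one level, so the levels of each parity glue
   together, and some level (not containing r) keeps dichromatic number at
   least chi / 2; each of its vertices reaches r through lower levels.
   Take a root r0 in a strong component of D, a level N of it with
   chi >= 2k - 1, a strong component C of N, the first vertex s of C on a
   path from r0, and finally a level A of C with respect to distances FROM s
   (levels of the converse digraph). Every u in A reaches r0 avoiding N,
   r0 reaches s avoiding C, and s reaches every v in A avoiding A. *)

From mathcomp Require Import all_boot zify.
From Stdlib Require Import Classical IndefiniteDescription Wf_nat.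
Set Implicit Arguments. Unset Strict Implicit. Unset Printing Implicit Defensive.

Section Dicolouring.
Variable V : finType.
Implicit Types (e : rel V) (A C S X Y : pred V).

Definition induced e S : rel V := fun x y => [&& S x, S y & e x y].
Definition converse e : rel V := fun x y => e y x.

Definition dicoloring_in e S k (f : V -> nat) :=
  (forall v, S v -> f v < k) /\ forall j, acyclic_in e (fun v => S v && (f v == j)).
Definition dicolorable_in e S k := exists f, dicoloring_in e S k f.
Definition dichrom_ge_in e S c := forall k, dicolorable_in e S k -> c <= k.

Lemma acyclic_in_sub e S1 S2 :
  (forall v, S1 v -> S2 v) -> acyclic_in e S2 -> acyclic_in e S1.
Proof. by move=> sub12 ac2 c cn /(sub_all sub12); apply: ac2. Qed.

Lemma acyclic_in_subset1 e S r :
  irreflexive e -> (forall v, S v -> v = r) -> acyclic_in e S.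
Proof.
move=> irr Sr [//|x s] _ /allP Sc; rewrite /= rcons_path.
by rewrite (Sr _ (Sc _ (mem_last x s))) (Sr _ (Sc _ (mem_head x s))) irr andbF.
Qed.

Lemma acyclic_in_converse e S : acyclic_in e S -> acyclic_in (converse e) S.
Proof.
move=> ac c cn Sc; rewrite /converse -rev_cycle; apply: ac; last by rewrite all_rev.
by rewrite -size_eq0 size_rev size_eq0.
Qed.

Lemma dicolorable_in_mono e S k k' :
  k <= k' -> dicolorable_in e S k -> dicolorable_in e S k'.
Proof. by move=> lekk' [f [ltf acf]]; exists f; split=> // v /ltf /leq_trans; apply. Qed.

Lemma dicolorable_in_sub e S1 S2 k : (forall v, S1 v -> S2 v) ->
  dicolorable_in e S2 k -> dicolorable_in e S1 k.
Proof.
move=> sub12 [f [ltf acf]]; exists f; split=> [v /sub12/ltf // | j].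
by apply: acyclic_in_sub (acf j) => v /andP[/sub12 -> ->].
Qed.

Lemma dicolorable_in_pred0 e S k : (forall v, ~~ S v) -> dicolorable_in e S k.
Proof.
move=> S0; exists (fun=> 0); split=> [v | j [//|x s] _ /andP[/andP[Sx _] _]].
  by rewrite (negbTE (S0 v)).
by rewrite (negbTE (S0 x)) in Sx.
Qed.

Lemma dicolorable_in_union e S1 S2 k1 k2 :
  dicolorable_in e S1 k1 -> dicolorable_in e S2 k2 ->
  dicolorable_in e (fun v => S1 v || S2 v) (k1 + k2).
Proof.
move=> [f1 [lt1 ac1]] [f2 [lt2 ac2]].
exists (fun v => if S1 v then f1 v else k1 + f2 v); split.
  move=> v; case S1v: (S1 v) => /= S2v; first by rewrite ltn_addr ?lt1.
  by rewrite ltn_add2l lt2.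
move=> j; case: (ltnP j k1) => [ltjk1 | lek1j].
  apply: acyclic_in_sub (ac1 j) => v; case: (S1 v) => //= /andP[_ /eqP fj].
  by move: ltjk1; rewrite -fj ltnNge leq_addr.
apply: acyclic_in_sub (ac2 (j - k1)) => v.
case S1v: (S1 v) => /=; last by case/andP=> S2v /eqP <-; rewrite S2v addKn eqxx.
by move/eqP=> fj; move: (lt1 v S1v); rewrite fj ltnNge lek1j.
Qed.

Lemma not_dichrom_ge_in_dicolorable e S c :
  ~ dichrom_ge_in e S c -> dicolorable_in e S c.-1.
Proof.
move=> nge; apply: NNPP => ncol; apply: nge => k colk.
by case: (leqP c k) => // ltkc; case: ncol; apply: dicolorable_in_mono colk; lia.
Qed.

Lemma dichrom_ge_in_converse e S c :
  dichrom_ge_in e S c -> dichrom_ge_in (converse e) S c.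
Proof.
move=> ge k [f [ltf acf]]; apply: ge; exists f; split=> // j.
exact: (acyclic_in_converse (e := converse e)).
Qed.

Lemma dicolorable_in_fibres (K : eqType) (key : V -> K) e S k :
  (forall c, all S c -> cycle e c -> {in c &, forall x y, key x = key y}) ->
  (forall i, dicolorable_in e (fun v => S v && (key v == i)) k) ->
  dicolorable_in e S k.
Proof.
move=> cycle_key col.
have [G colG] := functional_choice
  (fun i g => dicoloring_in e (fun v => S v && (key v == i)) k g) col.
exists (fun v => G (key v) v); split.
  by move=> v Sv; apply: (colG (key v)).1; rewrite Sv eqxx.
move=> j [//|x s] _ Sjc; apply/negP => cyc.
have Sc : all S (x :: s) by apply: sub_all Sjc => v /andP[].
have key_c := cycle_key _ Sc cyc.
have fibre_c : all (fun v => (S v && (key v == key x)) && (G (key x) v == j)) (x :: s).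
  apply/allP => v vc; have /andP[Sv] := allP Sjc v vc.
  by rewrite (key_c v x vc (mem_head x s)) Sv eqxx.
by rewrite (negbTE ((colG (key x)).2 j (x :: s) isT fibre_c)) in cyc.
Qed.


Lemma path_induced e S x p : S x -> all S p -> path e x p -> path (induced e S) x p.
Proof.
elim: p x => //= y p IHp x Sx /andP[Sy Sp] /andP[exy pyp].
by rewrite /induced Sx Sy exy IHp.
Qed.

Lemma path_induced_all e S x p : path (induced e S) x p -> all S p.
Proof. by elim: p x => //= y p IHp x /andP[/and3P[_ -> _] /IHp]. Qed.

Lemma connect_induced_sub e S1 S2 x y : (forall z, S1 z -> S2 z) ->
  connect (induced e S1) x y -> connect (induced e S2) x y.
Proof.
move=> sub12; apply: connect_sub => u v /and3P[S1u S1v euv]; apply: connect1.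
by rewrite /induced !sub12.
Qed.

Lemma connect_induced_start e S x y : connect (induced e S) x y -> S y -> S x.
Proof. by case/connectP=> [[|z p]] /=; [move=> _ -> | case/andP=> /and3P[]]. Qed.

Lemma connect_induced_converse e S x y :
  connect (induced (converse e) S) x y = connect (induced e S) y x.
Proof.
rewrite -[RHS]connect_rev /=; apply: eq_connect => u v.
by rewrite /induced /converse /= andbCA.
Qed.

Definition connect_outside e X x y :=
  connect (induced e (fun z => [|| z == x, z == y | ~~ X z])) x y.

Definition outer_linked e A := forall u v, A u -> A v -> connect_outside e A u v.

Lemma connect_outsideW e X Y x y : (forall z, Y z -> X z) ->
  connect_outside e X x y -> connect_outside e Y x y.
Proof.
move=> YX; apply: connect_induced_sub => z /or3P[-> | -> | nXz]; rewrite ?orbT //.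
by rewrite (contraNN (YX z)) ?orbT.
Qed.

Lemma connect_outside_trans e X x y z : ~~ X y ->
  connect_outside e X x y -> connect_outside e X y z -> connect_outside e X x z.
Proof.
move=> nXy cxy cyz; apply: connect_trans (connect_induced_sub _ cxy)
  (connect_induced_sub _ cyz) => w /or3P[/eqP-> | /eqP-> | ->];
  by rewrite ?eqxx ?nXy ?orbT.
Qed.

Lemma connect_outside1 e X x y : e x y -> connect_outside e X x y.
Proof. by move=> exy; apply: connect1; rewrite /induced !eqxx orbT exy. Qed.

Lemma connect_outside_converse e X x y :
  connect_outside (converse e) X x y = connect_outside e X y x.
Proof.
rewrite /connect_outside connect_induced_converse; apply: eq_connect => u v.
by rewrite /induced !orbA [(u == x) || _]orbC [(v == x) || _]orbC.
Qed.

Lemma outer_linked_hub e A h : ~~ A h ->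
  (forall u, A u -> connect_outside e A u h) ->
  (forall v, A v -> connect_outside e A h v) -> outer_linked e A.
Proof.
by move=> nAh to_h from_h u v Au Av; apply: connect_outside_trans (to_h u Au) (from_h v Av).
Qed.

Lemma connect_first_entry e C x p : ~~ C x -> C (last x p) -> path e x p ->
  exists2 s, C s & connect_outside e C x s.
Proof.
elim: p x => [|y p IHp] x /= nCx; first by rewrite (negbTE nCx).
move=> C_last /andP[exy pyp]; case Cy: (C y); first by exists y; last exact: connect_outside1.
have [s Cs cys] := IHp y (negbT Cy) C_last pyp; exists s => //.
by apply: connect_outside_trans (connect_outside1 _ exy) cys; rewrite Cy.
Qed.

Lemma connect_outside_path e X x y : x != y -> connect_outside e X x y ->
  exists p, [/\ path e x (rcons p y), uniq p & {in p, forall z, ~~ X z}].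
Proof.
move=> neq_xy /connectP[p px]; case: (shortenP px) => p' p'x uniq_p' _ y_last.
case/lastP: p' p'x uniq_p' y_last => [|q z] p'x uniq_p' y_last.
  by rewrite y_last eqxx in neq_xy.
rewrite last_rcons in y_last; subst z; exists q; split.
- by apply: sub_path p'x => u v /and3P[].
- by move: uniq_p'; rewrite /= rcons_uniq => /and3P[_ _].
move=> w wq; have := allP (path_induced_all p'x) w.
rewrite mem_rcons inE wq orbT => /(_ isT).
move: uniq_p'; rewrite /= mem_rcons inE negb_or rcons_uniq => /and3P[/andP[_ nxq] nyq _].
by rewrite (negbTE (memPn nxq w wq)) (negbTE (memPn nyq w wq)).
Qed.

Definition scc e S t : {set V} :=
  [set w | [&& S w, connect (induced e S) t w & connect (induced e S) w t]].

Lemma scc_refl e S t : S t -> t \in scc e S t.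
Proof. by move=> St; rewrite inE St !connect0. Qed.

Lemma scc_eq e S x y : connect (induced e S) x y -> connect (induced e S) y x ->
  scc e S x = scc e S y.
Proof.
move=> cxy cyx; apply/setP => z; rewrite !inE; case: (S z) => //=.
by apply/andP/andP=> -[c1 c2]; split; apply: connect_trans; eassumption.
Qed.

Lemma mem_scc e S t v : S v -> (v \in scc e S t) = (scc e S v == scc e S t).
Proof.
move=> Sv; apply/idP/eqP => [| <-]; last exact: scc_refl.
by rewrite inE => /and3P[_ ctv cvt]; apply: scc_eq.
Qed.

Lemma cycle_scc e S c : all S c -> cycle e c ->
  {in c &, forall x y, scc e S x = scc e S y}.
Proof.
move=> Sc cyc; have /allrelP con_c : all2rel (connect (induced e S)) c.
  rewrite -cycle_all2rel; last exact: connect_trans.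
  apply: (sub_in_cycle (P := S) (e := e)) => // u v Su Sv euv; apply: connect1.
  by move: Su Sv; rewrite /induced !unfold_in => -> ->.
by move=> x y xc yc; apply: scc_eq; apply: con_c.
Qed.

Lemma dichrom_ge_in_scc e S c : 0 < c -> dichrom_ge_in e S c ->
  exists2 t, S t & dichrom_ge_in e (fun w => w \in scc e S t) c.
Proof.
move=> c_gt0 ge; apply: NNPP => nscc.
suff : dicolorable_in e S c.-1 by move/ge; lia.
apply: (dicolorable_in_fibres (key := scc e S)) => [|X]; first exact: cycle_scc.
have [t /andP[St /eqP <-] | no_t] := pickP (fun v => S v && (scc e S v == X)).
  apply: (dicolorable_in_sub (S2 := fun w => w \in scc e S t)).
    by move=> v /andP[Sv]; rewrite mem_scc.
  by apply: not_dichrom_ge_in_dicolorable => ge_t; apply: nscc; exists t.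
by apply: dicolorable_in_pred0 => v; rewrite no_t.
Qed.


Lemma cycle_leq_eq (f : V -> nat) c :
  cycle (fun x y => f x <= f y) c -> {in c &, forall x y, f x = f y}.
Proof.
rewrite cycle_all2rel => [/allrelP le_c x y xc yc | y x z]; last exact: leq_trans.
by apply/eqP; rewrite eqn_leq !le_c.
Qed.

Section Distance.
Variables (e : rel V) (r : V).

Definition walk_to_root n v := [exists p : n.-tuple V, path e v p && (last v p == r)].

Lemma dist_subproof v : exists n, ~~ connect e v r || walk_to_root n v.
Proof.
case/boolP: (connect e v r) => [/connectP[p pv r_last] | _]; last by exists 0.
exists (size p); apply/existsP; exists (in_tuple p).
by rewrite /= pv -r_last eqxx.
Qed.

(* Junk value [0] when [r] is not reachable from [v]. *)
Definition dist v := ex_minn (dist_subproof v).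

Lemma dist_le v p : path e v p -> last v p = r -> dist v <= size p.
Proof.
move=> pv lp; rewrite /dist; case: ex_minnP => n _; apply; apply/orP; right.
by apply/existsP; exists (in_tuple p); rewrite /= pv lp eqxx.
Qed.

Lemma shortest_path v : connect e v r ->
  exists2 p, path e v p /\ last v p = r & size p = dist v.
Proof.
move=> cvr; rewrite /dist; case: ex_minnP => n; rewrite cvr /=.
by case/existsP=> p /andP[pv /eqP lp] _; exists p; rewrite ?size_tuple.
Qed.

Lemma dist_root : dist r = 0.
Proof. by apply/eqP; rewrite -leqn0 (dist_le (p := [::])). Qed.

Lemma dist_eq0 v : connect e v r -> dist v = 0 -> v = r.
Proof.
move=> cvr dv0; have [[|w p] [_ lp] sp] := shortest_path cvr; first by rewrite -lp.
by rewrite dv0 in sp.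
Qed.

Lemma dist_arc v w : e v w -> connect e w r -> dist v <= (dist w).+1.
Proof.
move=> evw /shortest_path[p [pw lp] <-].
by apply: (dist_le (p := w :: p)); rewrite /= ?evw.
Qed.

Lemma shortest_path_dist v : connect e v r ->
  exists p, [/\ path e v p, last v p = r & {in p, forall z, dist z < dist v}].
Proof.
case/shortest_path=> p [pv lp] sp; exists p; split=> // z zp.
case/splitPr: zp pv lp sp => p1 p2; rewrite cat_path last_cat /= size_cat /=.
case/and3P=> _ _ pz lz <-; have := dist_le pz lz; lia.
Qed.

End Distance.

Section Levels.
Variables (e : rel V) (S S' : pred V) (r : V).
Hypothesis S'_to_r : forall v, S' v -> connect (induced e S) v r.

Local Notation d := (dist (induced e S) r).

Definition level i v := S' v && (d v == i).

Lemma level_connect_outside i v : level i v -> connect_outside e (level i) v r.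
Proof.
case/andP=> S'v /eqP dv; have [p [pv lp dp]] := shortest_path_dist (S'_to_r S'v).
apply/connectP; exists p => //; apply: path_induced; first by rewrite eqxx.
  by apply/allP=> z /dp; rewrite /level dv => /ltn_eqF ->; rewrite andbF !orbT.
by apply: sub_path pv => x y /and3P[].
Qed.

Lemma root_notin_level i : 0 < i -> ~~ level i r.
Proof. by rewrite /level dist_root andbC; case: i. Qed.

Hypothesis Sr : S r.

Lemma dicolorable_level0 : irreflexive e -> dicolorable_in e (level 0) 1.
Proof.
move=> irr; exists (fun=> 0); split=> // j; apply: (acyclic_in_subset1 (r := r)) => // v.
by case/andP=> /andP[S'v /eqP] /dist_eq0 -> //; apply: S'_to_r.
Qed.

Lemma dicolorable_parity b k : (forall i, dicolorable_in e (level i) k) ->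
  dicolorable_in e (fun v => S' v && (odd (d v) == b)) k.
Proof.
move=> col; apply: (dicolorable_in_fibres (key := d)) => [c Pc cyc | i]; last first.
  by apply: dicolorable_in_sub (col i) => v /andP[/andP[S'v _] di]; rewrite /level S'v.
apply: cycle_leq_eq; apply: (sub_in_cycle (e := e)) Pc cyc => v w.
rewrite !unfold_in => /andP[S'v /eqP pv] /andP[S'w /eqP pw] evw.
have Sv := connect_induced_start (S'_to_r S'v) Sr.
have Sw := connect_induced_start (S'_to_r S'w) Sr.
have := dist_arc (e := induced e S) (r := r) (v := v) (w := w).
rewrite /induced Sv Sw evw => /(_ isT (S'_to_r S'w)).
rewrite leq_eqVlt ltnS => /orP[/eqP dvw | //].
by move: pv pw; rewrite dvw /= => <-; case: (odd _).
Qed.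

Lemma dicolorable_levels k : (forall i, dicolorable_in e (level i) k) ->
  dicolorable_in e S' (k + k).
Proof.
move=> col; apply: dicolorable_in_sub (dicolorable_in_union (dicolorable_parity true col)
  (dicolorable_parity false col)) => v S'v.
by rewrite S'v; case: (odd _).
Qed.

Lemma dichrom_ge_level c : irreflexive e -> 1 < c -> dichrom_ge_in e S' (2 * c - 1) ->
  exists2 i, 0 < i & dichrom_ge_in e (level i) c.
Proof.
move=> irr c_gt1 ge; apply: NNPP => no_level.
have col i : dicolorable_in e (level i) c.-1.
  case: i => [|i]; first by apply: dicolorable_in_mono (dicolorable_level0 irr); lia.
  by apply: not_dichrom_ge_in_dicolorable => ge_i; apply: no_level; exists i.+1.
have := ge _ (dicolorable_levels col); lia.
Qed.

End Levels.

Lemma dichrom_ge_outer_linked e k : irreflexive e -> 1 < k ->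
  dichrom_ge_in e predT (4 * k - 3) -> exists2 A, dichrom_ge_in e A k & outer_linked e A.
Proof.
move=> irr k_gt1 ge.
have [r0 _ geC1] := dichrom_ge_in_scc (ltac:(lia) : 0 < 4 * k - 3) ge.
set C1 := scc e predT r0 in geC1.
have C1_to_r0 v : v \in C1 -> connect (induced e predT) v r0 by rewrite inE => /and3P[].
have [i i_gt0 geN1] := dichrom_ge_level C1_to_r0 isT irr (ltac:(lia) : 1 < 2 * k - 1)
  (ltac:(by rewrite (_ : 2 * (2 * k - 1) - 1 = 4 * k - 3) //; lia)).
set N1 := level e predT (fun v => v \in C1) r0 i in geN1.
have [t N1t geC2] := dichrom_ge_in_scc (ltac:(lia) : 0 < 2 * k - 1) geN1.
set C2 := scc e N1 t in geC2.
have C2_N1 w : w \in C2 -> N1 w by rewrite inE => /and3P[].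
have [s C2s r0_s] : exists2 s, s \in C2 & connect_outside e (fun w => w \in C2) r0 s.
  have /connectP[p pr0 t_last] : connect (induced e predT) r0 t.
    by move: N1t => /andP[]; rewrite inE => /and3P[].
  apply: (connect_first_entry (p := p)).
  - by apply/negP=> /C2_N1; apply/negP; apply: root_notin_level.
  - by rewrite /= -t_last inE N1t !connect0.
  - by apply: sub_path pr0 => x y /and3P[].
have C2_to_s w : w \in C2 -> connect (induced (converse e) N1) w s.
  move: C2s; rewrite !inE => /and3P[_ _ cst] /and3P[_ ctw _].
  by rewrite connect_induced_converse (connect_trans cst ctw).
have [j j_gt0 geM] := dichrom_ge_level C2_to_s (C2_N1 s C2s) irr k_gt1
  (dichrom_ge_in_converse geC2).
set M := level (converse e) N1 (fun w => w \in C2) s j in geM.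
have M_C2 v : M v -> v \in C2 by case/andP.
have M_N1 v : M v -> N1 v by move/M_C2/C2_N1.
exists M; first exact: (dichrom_ge_in_converse geM).
apply: (outer_linked_hub (h := s)) => [| u Mu | v Mv].
- exact: root_notin_level.
- apply: (connect_outside_trans (y := r0)).
  + by apply/negP=> /M_N1; apply/negP; apply: root_notin_level.
  + exact: connect_outsideW M_N1 (level_connect_outside C1_to_r0 (M_N1 u Mu)).
  + exact: connect_outsideW M_C2 r0_s.
- by rewrite -connect_outside_converse; exact: (level_connect_outside C2_to_s Mv).
Qed.

End Dicolouring.

Lemma dichrom_ge_in_predT (V : finType) (E : rel V) c :
  dichrom_ge E c -> dichrom_ge_in E predT c.
Proof.
move=> ge k [f [ltf acf]]; apply: ge.
by exists (fun v => Ordinal (ltf v isT)) => i; apply: acf.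
Qed.

Section Subdigraph.
Variables (V : finType) (E : rel V) (A : pred V).

Definition subdigraph : rel {x : V | A x} := fun x y => E (val x) (val y).

Lemma dichrom_ge_subdigraph k : dichrom_ge_in E A k -> dichrom_ge subdigraph k.
Proof.
move=> ge k' [g acg]; apply: ge.
exists (fun v => if insub v is Some w then val (g w) else 0); split.
  by move=> v Av; rewrite insubT /=.
move=> j c cn Ajc.
have /all_sigP[s def_c] : all A c by apply: sub_all Ajc => v /andP[].
have colour_s w : w \in s -> val (g w) = j.
  move=> ws; have /andP[_] := allP Ajc (val w) (ltac:(by rewrite def_c map_f)).
  by rewrite valK => /eqP.
rewrite def_c cycle_map; case: s def_c cn colour_s => [-> // | w s] _ _ colour_s.
apply: (acg (g w)) => //; apply/allP => w' w's; apply/eqP/val_inj.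
by rewrite !colour_s ?mem_head.
Qed.

(* The arc [(u, v)] is routed along a path whose interior lies outside [A],
   so it meets no branch vertex and no other subdivided arc. *)
Lemma contains_subdivision_add_arc (VF : finType) (EF : rel VF) (u v : VF) :
  u != v -> outer_linked E A ->
  contains_subdivision (del_arc EF (u, v)) subdigraph -> contains_subdivision EF E.
Proof.
move=> neq_uv linked [phi [P [inj_phi [pathP disjP]]]].
have neq_phi : val (phi u) != val (phi v) by rewrite (inj_eq val_inj) (inj_eq inj_phi).
have [Q [pathQ uniqQ outQ]] :=
  connect_outside_path neq_phi (linked _ _ (valP (phi u)) (valP (phi v))).
have notin_A z w : ~~ A z -> z != val (phi w).
  by apply: contraNneq => ->; apply: valP.
have del_uv x y : EF x y -> (x, y) != (u, v) -> del_arc EF (u, v) x y.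
  by rewrite /del_arc => -> ->.
exists (val \o phi), (fun x y => if (x, y) == (u, v) then Q else map val (P x y)).
split; first exact: inj_comp val_inj inj_phi.
split=> [x y Exy | x y x' y' Exy Ex'y' neq z].
  case: eqP => [[-> ->] | /eqP neq_xy]; first by split=> // z /outQ /notin_A.
  have [pathPxy uniqPxy branchPxy] := pathP x y (del_uv x y Exy neq_xy).
  split; first by rewrite /= -map_rcons path_map.
    by rewrite map_inj_uniq //; apply: val_inj.
  by move=> _ /mapP[z zP ->] w; rewrite (inj_eq val_inj) branchPxy.
case: eqP => [exy | /eqP nxy]; case: eqP => [ex'y' | /eqP nx'y'].
- by rewrite exy ex'y' eqxx in neq.
- by move=> /outQ nAz; apply/mapP=> -[w _ def_z]; rewrite def_z valP in nAz.
- by case/mapP=> w _ ->; apply/negP=> /outQ; rewrite valP.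
- case/mapP=> w wP ->; rewrite mem_map; last exact: val_inj.
  exact: disjP (del_uv x y Exy nxy) (del_uv x' y' Ex'y' nx'y') neq w wP.
Qed.

End Subdigraph.

Lemma mad_bound_gt1 (VF : finType) (EF : rel VF) (u v : VF) k :
  u != v -> mad_bound EF k -> 1 < k.
Proof.
move=> neq_uv bound; rewrite ltnNge; apply/negP => k_le1.
have [k' [f _] | phi [_ [inj_phi _]]] := bound unit (fun _ _ => false) (fun _ => erefl).
  by have := ltn_ord (f tt); lia.
by move/eqP: neq_uv; apply; apply: inj_phi; case: (phi u); case: (phi v).
Qed.

Lemma mad_bound_del_arc (VF : finType) (EF : rel VF) (u v : VF) k :
  loopless EF -> EF u v ->
  mad_bound (del_arc EF (u, v)) k -> mad_bound EF (4 * k - 3).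
Proof.
move=> loopF Euv bound V E loopE ge.
have neq_uv : u != v by apply: contraTneq Euv => ->; rewrite loopF.
have [A geA linkA] := dichrom_ge_outer_linked loopE (mad_bound_gt1 neq_uv bound)
  (dichrom_ge_in_predT ge).
apply: contains_subdivision_add_arc neq_uv linkA _.
by apply: bound (dichrom_ge_subdigraph geA) => x; apply: loopE.
Qed.

Lemma ex_minimal_nat (P : nat -> Prop) n : P n -> exists m, P m /\ forall c, P c -> m <= c.
Proof.
move=> Pn; have [m [[Pm min_m] _]] :=
  dec_inh_nat_subset_has_unique_least_element P (fun c => classic (P c)) (ex_intro _ n Pn).
by exists m; split=> // c /min_m /leP.
Qed.

Theorem lemma31 (VF : finType) (EF : rel VF) (a : VF * VF) :
  loopless EF -> EF a.1 a.2 ->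
  maderian (del_arc EF a) ->
  maderian EF /\
  forall m, is_mad (del_arc EF a) m ->
    exists m', is_mad EF m' /\ m' <= 4 * m - 3.
Proof.
case: a => u v /= loopF Euv [c bound_c].
split; first by exists (4 * c - 3); apply: mad_bound_del_arc bound_c.
move=> m [bound_m _]; have bound_F := mad_bound_del_arc loopF Euv bound_m.
have [m' [bound_m' min_m']] := ex_minimal_nat bound_F.
by exists m'; split; [split | apply: min_m'].
Qed.
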